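(* Let $A$ be a real symmetric $n\times n$ matrix and suppose there exist $\alpha\in\mathbb{R}$ with $A+\alpha I\neq 0$ and an integer $k$ with $1\le k<n/2$ such that $$\mathbb{1}^\top A\mathbb{1}\ge\sqrt{(n-k)^2+k^2}\,\|A+\alpha I\|_F-n\alpha.$$ Then the largest (rightmost) eigenvalue of $A$ is simple, and a corresponding eigenvector can be chosen (up to sign) so that it has at least $n-k+1$ nonnegative entries.
   Context: $\mathbb{1}\in\mathbb{R}^n$ is the all-ones vector, $I$ the identity matrix, and $\|\cdot\|_F$ the Frobenius norm. *)

(* Real numbers are modelled by an arbitrary real closed field R. *)
From HB Require Import structures.
From mathcomp Require Export all_boot all_order all_algebra.
Set Implicit Arguments. Unset Strict Implicit. Unset Printing Implicit Defensive.
Import Order.TTheory GRing.Theory Num.Theory.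
Local Open Scope ring_scope.

Definition frob_norm (R : rcfType) (n : nat) (M : 'M[R]_n) : R :=
  Num.sqrt (\sum_(i < n) \sum_(j < n) M i j ^+ 2).

Definition ones_quad (R : rcfType) (n : nat) (M : 'M[R]_n) : R :=
  \sum_(i < n) \sum_(j < n) M i j.

Definition simple_eigenvalue (R : rcfType) (n : nat) (M : 'M[R]_n) (a : R) : Prop :=
  mup a (char_poly M) = 1%N.

(* Write A = P^* D P with P unitary (over R[i]) and D = diag(r_j) real, and let
   w_j be the squared modulus of the j-th coordinate of the all-ones vector in
   the eigenbasis; then sum_j w_j = n, 1^T (A + alpha I) 1 = sum_j (r_j + alpha) w_j
   and ||A + alpha I||_F^2 = sum_j (r_j + alpha)^2.  If a >= b are the two largest
   shifted eigenvalues, the hypothesis gives c ||A + alpha I||_F <= a w_1 + b (n - w_1)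
   with c = sqrt((n-k)^2 + k^2) > n / sqrt 2, and Cauchy-Schwarz forces a > b and
   w_1 >= n - k.  For a top eigenvector v one has (sum v)^2 = w_1 ||v||^2, so after
   choosing the sign with sum v >= 0, v cannot have n - k or fewer nonnegative
   entries, again by Cauchy-Schwarz on its nonnegative part. *)

From mathcomp Require Import complex.
From mathcomp Require Import ring lra zify.
Set Implicit Arguments. Unset Strict Implicit. Unset Printing Implicit Defensive.
Import Order.TTheory GRing.Theory Num.Theory.
Local Open Scope ring_scope.
Local Open Scope sesquilinear_scope.

Lemma diag_form {C : numClosedFieldType} n (y z e : 'rV[C]_n) :
  (y *m diag_mx e *m z^t*) 0 0 = \sum_j y 0 j * e 0 j * (z 0 j)^*.
Proof. by rewrite mul_mx_diag !mxE; apply: eq_bigr => j _; rewrite !mxE. Qed.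

Lemma unitary_diag_form {C : numClosedFieldType} n (P : 'M[C]_n) (e x z : 'rV[C]_n) :
  (x *m (P^t* *m diag_mx e *m P) *m z^t*) 0 0 =
  \sum_j (x *m P^t*) 0 j * e 0 j * ((z *m P^t*) 0 j)^*.
Proof. by rewrite -diag_form trmx_mul map_mxM trmxCK !mulmxA. Qed.

Lemma real_complex_sqr_norm (R : rcfType) (x : R[i]) :
  real_complex R (complex.Re x ^+ 2 + complex.Im x ^+ 2) = x * x^*.
Proof. by rewrite add_Re2_Im2 sqr_normc. Qed.

Lemma conj_real_complex (R : rcfType) (x : R) : (real_complex R x)^* = real_complex R x.
Proof. by apply/CrealP; rewrite complex_real. Qed.

Lemma char_poly_similar {F : fieldType} n (P M : 'M[F]_n) : P \in unitmx ->
  char_poly (invmx P *m M *m P) = char_poly M.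
Proof.
move=> Pu; pose f := map_mx (@polyC F) : 'M[F]_n -> 'M[{poly F}]_n.
have similar_mx : char_poly_mx (invmx P *m M *m P) = f (invmx P) *m char_poly_mx M *m f P.
  rewrite /char_poly_mx /f !map_mxM mulmxBr mulmxBl -!mulmxA; congr (_ - _).
  by rewrite -scalar_mxC mulmxA -map_mxM mulVmx // map_mx1 mul1mx.
rewrite /char_poly similar_mx !det_mulmx mulrC mulrA -det_mulmx /f -map_mxM mulmxV //.
by rewrite map_mx1 det1 mul1r.
Qed.

Lemma real_spectral {R : rcfType} n (A : 'M[R]_n) : A^T = A ->
  exists (P : 'M[R[i]]_n) (r : 'I_n -> R), P \is unitarymx /\
    map_mx (real_complex R) A = P^t* *m diag_mx (\row_j real_complex R (r j)) *m P.
Proof.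
move=> A_sym; set AC := map_mx (real_complex R) A.
have AC_herm : AC \is hermsymmx.
  apply: realsym_hermsym.
    by apply/is_hermitianmxP; rewrite expr0 scale1r map_mx_id // /AC map_trmx A_sym.
  by apply/mxOverP => i j; rewrite mxE complex_real.
have /mxOverP real_diag := hermitian_spectral_diag_real AC_herm.
exists (spectralmx AC), (fun j => complex.Re (spectral_diag AC 0 j)).
split; first exact: spectral_unitarymx.
have -> : \row_j real_complex R (complex.Re (spectral_diag AC 0 j)) = spectral_diag AC.
  by apply/rowP => j; rewrite mxE RRe_real.
rewrite -invmx_unitary ?spectral_unitarymx //.
exact/orthomx_spectralP/hermitian_normalmx.
Qed.

Lemma mup_map_poly (F K : fieldType) (f : {rmorphism F -> K}) (p : {poly F}) x :
  p != 0 -> mup (f x) (map_poly f p) = mup x p.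
Proof.
move=> p0; have fp0 : map_poly f p != 0 by rewrite map_poly_eq0.
apply/eqP; rewrite eqn_leq mup_leq // mup_geq //.
rewrite -(map_polyXsubC f) -rmorphXn dvdp_map -mup_leq // leqnn /=.
by rewrite -rmorphXn dvdp_map -mup_geq.
Qed.

Lemma sum_row_form {R : comNzRingType} n (v : 'rV[R]_n) :
  \sum_i v 0 i = (v *m 1%:M *m (const_mx 1 : 'rV[R]_n)^T) 0 0.
Proof. by rewrite mulmx1 !mxE; apply: eq_bigr => i _; rewrite !mxE mulr1. Qed.

Lemma sum_sqr_row_form {R : comNzRingType} n (v : 'rV[R]_n) :
  \sum_i v 0 i ^+ 2 = (v *m 1%:M *m v^T) 0 0.
Proof. by rewrite mulmx1 !mxE; apply: eq_bigr => i _; rewrite !mxE expr2. Qed.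

Lemma ones_quad_form {R : rcfType} n (B : 'M[R]_n) :
  ones_quad B = ((const_mx 1 : 'rV[R]_n) *m B *m (const_mx 1 : 'rV[R]_n)^T) 0 0.
Proof.
rewrite /ones_quad mxE exchange_big /=; apply: eq_bigr => j _.
rewrite !mxE mulr1; apply: eq_bigr => i _; by rewrite mxE mul1r.
Qed.

Lemma sum_sqr_entries_mxtrace {R : comNzRingType} n (B : 'M[R]_n) : B^T = B ->
  \sum_i \sum_j B i j ^+ 2 = \tr (B *m B).
Proof.
move=> Bsym; apply: eq_bigr => i _; rewrite mxE; apply: eq_bigr => j _.
by rewrite -[in B j i]Bsym mxE expr2.
Qed.

Lemma sqr_frob_norm (R : rcfType) n (M : 'M[R]_n) :
  frob_norm M ^+ 2 = \sum_i \sum_j M i j ^+ 2.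
Proof. by rewrite sqr_sqrtr // sumr_ge0 // => i _; rewrite sumr_ge0 // => j _; rewrite sqr_ge0. Qed.

Lemma frob_norm_gt0 (R : rcfType) n (M : 'M[R]_n) : M != 0 -> 0 < frob_norm M.
Proof.
move=> M_neq0; have row_ge0 i : 0 <= \sum_j M i j ^+ 2.
  by apply: sumr_ge0 => j _; apply: sqr_ge0.
rewrite sqrtr_gt0 lt0r sumr_ge0 // andbT; apply: contra M_neq0 => /eqP sum_eq0.
apply/eqP/matrixP => i j; rewrite mxE; apply/eqP; rewrite -sqrf_eq0.
have row_eq0 : \sum_j M i j ^+ 2 = 0.
  exact: (psumr_eq0P (fun i' _ => row_ge0 i') sum_eq0).
by apply/eqP; apply: (psumr_eq0P (fun j' _ => sqr_ge0 (M i j')) row_eq0).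
Qed.

Lemma ones_quad_shift (R : rcfType) n (A : 'M[R]_n) alpha :
  ones_quad (A + alpha%:M) = ones_quad A + n%:R * alpha.
Proof.
have -> : n%:R * alpha = \sum_(i < n) alpha by rewrite sumr_const card_ord mulr_natl.
rewrite /ones_quad -big_split /=; apply: eq_bigr => i _.
under eq_bigr do rewrite mxE.
rewrite big_split /=; congr (_ + _).
rewrite (bigD1 i) //= big1 ?addr0 => [|j j_neq]; first by rewrite mxE eqxx.
by rewrite mxE eq_sym (negPf j_neq).
Qed.

Section TopTwoEigenvalues.

(* a >= b stand for the two largest eigenvalues of A + alpha I, t for the
   weight of the top one and F for its Frobenius norm. *)
Variables (R : rcfType) (N K a b t F : R).
Let c : R := Num.sqrt ((N - K) ^+ 2 + K ^+ 2).
Hypothesis K_lt_half : 2 * K < N.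
Hypotheses (ab_le_F : a ^+ 2 + b ^+ 2 <= F ^+ 2) (F_gt0 : 0 < F).
Hypotheses (b_le_a : b <= a) (cF_le : c * F <= a * t + b * (N - t)).

Let cF_ge0 : 0 <= c * F. Proof. by rewrite mulr_ge0 ?sqrtr_ge0 // ltW. Qed.

Let sqr_c : c ^+ 2 = (N - K) ^+ 2 + K ^+ 2.
Proof. by rewrite sqr_sqrtr // addr_ge0 ?sqr_ge0. Qed.

Lemma mean_lt_sqrt_frob : (a + b) * N / 2 < c * F.
Proof.
rewrite ltNge; apply/negP => mean_ge.
have N_lt : N ^+ 2 < 2 * c ^+ 2.
  have : 0 < (N - 2 * K) ^+ 2 by rewrite exprn_gt0 // subr_gt0.
  by rewrite sqr_c; nra.
have sqr_le : (c * F) ^+ 2 <= ((a + b) * N / 2) ^+ 2.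
  by rewrite ler_sqr ?nnegrE //; apply: le_trans mean_ge.
have : (a + b) ^+ 2 <= 2 * F ^+ 2.
  rewrite -subr_ge0.
  have -> : 2 * F ^+ 2 - (a + b) ^+ 2 = 2 * (F ^+ 2 - (a ^+ 2 + b ^+ 2)) + (a - b) ^+ 2.
    by ring.
  by rewrite addr_ge0 ?sqr_ge0 // mulr_ge0 // subr_ge0.
move=> /(ler_wpM2r (sqr_ge0 N)) sum_le.
have F2_gt0 : 0 < F ^+ 2 by rewrite exprn_gt0.
have : F ^+ 2 * N ^+ 2 < F ^+ 2 * (2 * c ^+ 2) by rewrite ltr_pM2l.
move: sqr_le; rewrite !exprMn; nra.
Qed.

Lemma top_two_gap : b < a.
Proof.
rewrite lt_neqAle b_le_a andbT; apply/eqP => eq_ba.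
have := mean_lt_sqrt_frob; rewrite ltNge => /negP; apply.
have -> : (a + b) * N / 2 = a * t + b * (N - t) by rewrite eq_ba; field.
exact: cF_le.
Qed.

Lemma top_weight_ge : N - K <= t.
Proof.
rewrite leNgt; apply/negP => t_lt.
(* For t <= N/2 the bound reduces to mean_lt_sqrt_frob; for N/2 < t < N - K,
   Cauchy-Schwarz gives c F <= F sqrt (t^2 + (N-t)^2) < c F. *)
have [t_le_half|t_gt_half] := lerP (2 * t) N.
  have : a * t + b * (N - t) <= (a + b) * N / 2.
    rewrite -subr_ge0.
    have -> : (a + b) * N / 2 - (a * t + b * (N - t)) = (a - b) * (N - 2 * t) / 2.
      by field.
    by rewrite divr_ge0 // mulr_ge0 // subr_ge0.
  by move/(le_trans cF_le)/le_lt_trans/(_ mean_lt_sqrt_frob); rewrite ltxx.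
have cauchy : (a * t + b * (N - t)) ^+ 2 <= (a ^+ 2 + b ^+ 2) * (t ^+ 2 + (N - t) ^+ 2).
  rewrite -subr_ge0.
  have -> : (a ^+ 2 + b ^+ 2) * (t ^+ 2 + (N - t) ^+ 2) - (a * t + b * (N - t)) ^+ 2 =
            (a * (N - t) - b * t) ^+ 2 by ring.
  exact: sqr_ge0.
have g_lt : t ^+ 2 + (N - t) ^+ 2 < c ^+ 2.
  rewrite sqr_c -subr_gt0.
  have -> : (N - K) ^+ 2 + K ^+ 2 - (t ^+ 2 + (N - t) ^+ 2) = 2 * ((N - K - t) * (t - K)).
    by ring.
  by rewrite mulr_gt0 // mulr_gt0 // subr_gt0; lra.
have : (c * F) ^+ 2 <= (a * t + b * (N - t)) ^+ 2.
  by rewrite ler_sqr ?nnegrE //; apply: le_trans cF_le.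
have g_ge0 : 0 <= t ^+ 2 + (N - t) ^+ 2 by rewrite addr_ge0 ?sqr_ge0.
have := ler_wpM2r g_ge0 ab_le_F.
have : F ^+ 2 * (t ^+ 2 + (N - t) ^+ 2) < F ^+ 2 * c ^+ 2 by rewrite ltr_pM2l ?exprn_gt0.
rewrite exprMn; lra.
Qed.

End TopTwoEigenvalues.

Lemma sqr_sum_le_card_sum_sqr (R : realFieldType) (I : finType) (S : {pred I}) (x : I -> R) :
  (\sum_(i in S) x i) ^+ 2 <= #|S|%:R * \sum_(i in S) x i ^+ 2.
Proof.
set s := \sum_(i in S) x i; set q := \sum_(i in S) x i ^+ 2.
have inner i : \sum_(j in S) (x i - x j) ^+ 2 = #|S|%:R * x i ^+ 2 - 2 * x i * s + q.
  under eq_bigr do rewrite sqrrB.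
  rewrite !big_split /= sumrN sumr_const sumrMnl -mulr_sumr.
  by rewrite -/s -/q; ring.
have : 0 <= \sum_(i in S) \sum_(j in S) (x i - x j) ^+ 2.
  by apply: sumr_ge0 => i _; apply: sumr_ge0 => j _; apply: sqr_ge0.
under eq_bigr do rewrite inner.
rewrite !big_split /= sumrN !sumr_const -mulr_sumr -mulr_suml -mulr_sumr -/s -/q => h.
rewrite -subr_ge0 (_ : _ - _ = (#|S|%:R * q - 2 * s * s + q *+ #|S|) / 2).
  exact: divr_ge0.
by field.
Qed.

Lemma card_nonneg_gt (R : realFieldType) (I : finType) (x : I -> R) (m : nat) :
  (0 < m < #|I|)%N -> 0 <= \sum_i x i -> m%:R * \sum_i x i ^+ 2 <= (\sum_i x i) ^+ 2 ->
  (m < #|[set i | (0 <= x i)%R]|)%N.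
Proof.
move=> /andP[m_gt0 m_lt] sum_ge0 bound; rewrite ltnNge; apply/negP => card_le.
set S := [set i | (0 <= x i)%R] in card_le.
have [j j_notin] : exists j, j \notin S.
  apply/existsP; rewrite -negb_forall; apply: contraTN card_le => /forallP S_full.
  by rewrite -ltnNge (leq_trans m_lt) // subset_leq_card //; apply/subsetP => i _; apply: S_full.
have xj_lt0 : x j < 0 by move: j_notin; rewrite inE ltNge.
have sum_out_le0 : \sum_(i | i \notin S) x i <= 0.
  by apply: sumr_le0 => i; rewrite inE -ltNge => /ltW.
have sum_in_ge0 : 0 <= \sum_(i in S) x i by apply: sumr_ge0 => i; rewrite inE.
have sqr_out_gt0 : 0 < \sum_(i | i \notin S) x i ^+ 2.
  rewrite (bigD1 j) //= ltr_pwDl ?exprn_even_gt0 ?ltr0_neq0 //.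
  by apply: sumr_ge0 => i _; apply: sqr_ge0.
have sqr_in_ge0 : 0 <= \sum_(i in S) x i ^+ 2 by apply: sumr_ge0 => i _; apply: sqr_ge0.
have sqr_sum_le : (\sum_i x i) ^+ 2 <= (\sum_(i in S) x i) ^+ 2.
  by rewrite ler_sqr ?nnegrE // [X in X <= _](bigID (mem S)) /= gerDl.
have card_bound : #|S|%:R * \sum_(i in S) x i ^+ 2 <= m%:R * \sum_(i in S) x i ^+ 2.
  by rewrite ler_wpM2r // ler_nat.
have out_pos : 0 < m%:R * \sum_(i | i \notin S) x i ^+ 2 by rewrite mulr_gt0 ?ltr0n.
have := sqr_sum_le_card_sum_sqr S x.
move: bound; rewrite (bigID (mem S) _ (fun i => x i ^+ 2)) /= mulrDr; lra.
Qed.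

Section RealSpectralDecomposition.

Variables (R : rcfType) (n : nat) (A : 'M[R]_n) (P : 'M[R[i]]_n) (r : 'I_n -> R).
Local Notation toC := (real_complex R).
Local Notation onesC := (const_mx 1 : 'rV[R[i]]_n).
Hypothesis A_sym : A^T = A.
Hypothesis P_unitary : P \is unitarymx.
Hypothesis A_spectral : map_mx toC A = P^t* *m diag_mx (\row_j toC (r j)) *m P.

Let PtP : P^t* *m P = 1%:M.
Proof. by rewrite -invmx_unitary // mulVmx // unitarymx_unit. Qed.

Lemma real_form_spectral (B : 'M[R]_n) (s : 'I_n -> R) (u v : 'rV[R]_n) :
  map_mx toC B = P^t* *m diag_mx (\row_j toC (s j)) *m P ->
  toC ((u *m B *m v^T) 0 0) =
  \sum_j (map_mx toC u *m P^t*) 0 j * toC (s j) * ((map_mx toC v *m P^t*) 0 j)^*.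
Proof.
move=> BE; have -> : toC ((u *m B *m v^T) 0 0) = map_mx toC (u *m B *m v^T) 0 0.
  by rewrite [RHS]mxE.
rewrite !map_mxM.
have -> : map_mx toC v^T = (map_mx toC v)^t*.
  by apply/matrixP => i j; rewrite !mxE conj_real_complex.
by rewrite BE unitary_diag_form; apply: eq_bigr => j _; rewrite !mxE.
Qed.

Lemma one_spectral : map_mx toC 1%:M = P^t* *m diag_mx (\row_j toC 1) *m P.
Proof.
have -> : \row_j toC 1 = const_mx 1 :> 'rV[R[i]]_n by apply/rowP => j; rewrite !mxE rmorph1.
by rewrite map_mx1 diag_const_mx mulmx1 PtP.
Qed.

Lemma shift_spectral alpha :
  map_mx toC (A + alpha%:M) = P^t* *m diag_mx (\row_j toC (r j + alpha)) *m P.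
Proof.
have -> : diag_mx (\row_j toC (r j + alpha)) =
          diag_mx (\row_j toC (r j)) + (toC alpha)%:M.
  by apply/matrixP => i j; rewrite !mxE; case: eqP => _; rewrite ?mulr1n ?mulr0n ?addr0 ?rmorphD.
rewrite map_mxD A_spectral map_scalar_mx mulmxDr mulmxDl scalar_mxC.
by rewrite -[_%:M *m _ *m _]mulmxA PtP mulmx1.
Qed.

(* The rows of P are the eigenvectors q_j of A, so weight j = (1^T q_j)^2. *)
Definition weight (j : 'I_n) : R :=
  complex.Re ((onesC *m P^t*) 0 j) ^+ 2 + complex.Im ((onesC *m P^t*) 0 j) ^+ 2.

Lemma weight_ge0 j : 0 <= weight j.
Proof. by rewrite addr_ge0 ?sqr_ge0. Qed.

Lemma real_complex_weight j :
  toC (weight j) = (onesC *m P^t*) 0 j * ((onesC *m P^t*) 0 j)^*.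
Proof. exact: real_complex_sqr_norm. Qed.

Lemma sum_weight : \sum_j weight j = n%:R.
Proof.
apply: (@complexI R); rewrite rmorph_sum rmorph_nat /=.
have := real_form_spectral (const_mx 1) (const_mx 1) one_spectral.
rewrite -sum_row_form map_const_mx rmorph1 => /esym ones_formE.
under eq_bigr do rewrite real_complex_weight -[X in X * _]mulr1.
rewrite ones_formE; under eq_bigr do rewrite mxE.
by rewrite sumr_const card_ord rmorph_nat.
Qed.

Lemma ones_quad_spectral alpha :
  ones_quad (A + alpha%:M) = \sum_j (r j + alpha) * weight j.
Proof.
apply: (@complexI R); rewrite ones_quad_form (real_form_spectral _ _ (shift_spectral alpha)).
rewrite map_const_mx rmorph1 rmorph_sum /=; apply: eq_bigr => j _.
by rewrite rmorphM /= real_complex_weight mulrAC mulrC.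
Qed.

Lemma sum_sqr_spectral alpha :
  \sum_i \sum_j (A + alpha%:M) i j ^+ 2 = \sum_j (r j + alpha) ^+ 2.
Proof.
have Bsym : (A + alpha%:M)^T = A + alpha%:M by rewrite linearD /= tr_scalar_mx A_sym.
rewrite sum_sqr_entries_mxtrace //; apply: (@complexI R).
have -> : toC (\tr ((A + alpha%:M) *m (A + alpha%:M))) =
          \tr (map_mx toC ((A + alpha%:M) *m (A + alpha%:M))).
  by rewrite /mxtrace rmorph_sum; apply: eq_bigr => i _; rewrite [RHS]mxE.
rewrite map_mxM shift_spectral -!mulmxA mxtrace_mulC -!mulmxA (unitarymxP P_unitary).
rewrite mulmx1 mxtrace_mulC !mulmxA (unitarymxP P_unitary) mul1mx mulmx_diag mxtrace_diag rmorph_sum.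
by apply: eq_bigr => j _; rewrite !mxE rmorphXn expr2.
Qed.

Lemma char_poly_spectral :
  map_poly toC (char_poly A) = \prod_j ('X - (toC (r j))%:P).
Proof.
rewrite map_char_poly A_spectral -invmx_unitary // char_poly_similar ?unitarymx_unit //.
rewrite char_poly_trig ?diag_mx_is_trig //.
by apply: eq_bigr => j _; rewrite !mxE eqxx mulr1n.
Qed.

Lemma eigenvalue_spectral mu : eigenvalue A mu = [exists j, mu == r j].
Proof.
rewrite eigenvalue_root_char -(fmorph_root toC) char_poly_spectral /root horner_prod.
apply/prodf_eq0/existsP => [[j _]|[j /eqP ->]]; last first.
  by exists j => //; rewrite hornerXsubC subrr.
by rewrite hornerXsubC subr_eq0 => /eqP /complexI ->; exists j.
Qed.

Lemma mup_char_poly_spectral j1 :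
  (forall j, j != j1 -> r j != r j1) -> mup (r j1) (char_poly A) = 1%N.
Proof.
move=> r_simple.
rewrite -(@mup_map_poly _ _ toC) ?monic_neq0 ?char_poly_monic // char_poly_spectral.
rewrite (bigD1 j1) //= mulrC mupMr.
  by have := mup_XsubCX 1 (toC (r j1)) (toC (r j1)); rewrite eqxx expr1.
rewrite /root horner_prod; apply/prodf_eq0 => -[j j_neq].
by rewrite hornerXsubC subr_eq0 => /eqP /complexI /esym /eqP; rewrite (negPf (r_simple j j_neq)).
Qed.

Lemma eigenvector_sqr_sum j1 (v : 'rV[R]_n) :
  (forall j, j != j1 -> r j != r j1) -> v *m A = r j1 *: v ->
  (\sum_i v 0 i) ^+ 2 = weight j1 * \sum_i v 0 i ^+ 2.
Proof.
move=> r_simple vA.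
set z := map_mx toC v *m P^t*.
have zD : z *m diag_mx (\row_j toC (r j)) = toC (r j1) *: z.
  have AP : map_mx toC A *m P^t* = P^t* *m diag_mx (\row_j toC (r j)).
    by rewrite A_spectral -!mulmxA (unitarymxP P_unitary) mulmx1.
  by rewrite /z -mulmxA -AP mulmxA -map_mxM vA map_mxZ scalemxAl.
have z_eq0 j : j != j1 -> z 0 j = 0.
  move=> j_neq; move/rowP/(_ j): zD; rewrite mul_mx_diag !mxE => zj.
  apply: contraNeq (r_simple j j_neq) => zj_neq0.
  by apply/eqP/complexI/(mulfI zj_neq0); rewrite zj mulrC.
have form_in_eigenbasis (u : 'rV[R]_n) :
    toC ((v *m 1%:M *m u^T) 0 0) = z 0 j1 * ((map_mx toC u *m P^t*) 0 j1)^*.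
  rewrite (real_form_spectral _ _ one_spectral) (bigD1 j1) //= big1 ?addr0.
    by rewrite rmorph1 mulr1.
  by move=> j j_neq; rewrite z_eq0 // !mul0r.
have sum_v := form_in_eigenbasis (const_mx 1).
have sqr_sum_v := form_in_eigenbasis v.
rewrite -sum_row_form map_const_mx rmorph1 in sum_v.
rewrite -sum_sqr_row_form -/z in sqr_sum_v.
apply: (@complexI R); rewrite !rmorphM /= real_complex_weight sqr_sum_v.
by rewrite -{2}[toC _]conj_real_complex sum_v rmorphM /= conjCK; ring.
Qed.

Lemma top_eigenvector j1 :
  (forall j, j != j1 -> r j != r j1) ->
  exists2 x : 'rV[R]_n, x != 0 &
    [/\ x *m A = r j1 *: x, 0 <= \sum_i x 0 i &
        (\sum_i x 0 i) ^+ 2 = weight j1 * \sum_i x 0 i ^+ 2].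
Proof.
move=> r_simple.
have : eigenvalue A (r j1) by rewrite eigenvalue_spectral; apply/existsP; exists j1.
case/eigenvalueP => v vA v_neq0.
have [sum_ge0|sum_lt0] := lerP 0 (\sum_i v 0 i).
  by exists v => //; split => //; apply: eigenvector_sqr_sum.
have sum_opp : \sum_i (- v) 0 i = - \sum_i v 0 i.
  by rewrite -sumrN; apply: eq_bigr => i _; rewrite mxE.
have opp_vA : - v *m A = r j1 *: - v by rewrite mulNmx vA scalerN.
exists (- v); first by rewrite oppr_eq0.
split => //; first by rewrite sum_opp oppr_ge0 ltW.
exact: eigenvector_sqr_sum.
Qed.

Lemma ones_quad_le_top_two alpha j1 j2 :
  (forall j, j != j1 -> r j <= r j2) ->
  ones_quad (A + alpha%:M) <=
    (r j1 + alpha) * weight j1 + (r j2 + alpha) * (n%:R - weight j1).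
Proof.
move=> j2_max; rewrite ones_quad_spectral (bigD1 j1) //= lerD2l.
have -> : n%:R - weight j1 = \sum_(j | j != j1) weight j.
  by rewrite -sum_weight (bigD1 j1) //= addrAC subrr add0r.
rewrite mulr_sumr; apply: ler_sum => j j_neq.
by rewrite ler_wpM2r ?weight_ge0 // lerD2r j2_max.
Qed.

Lemma sqr_top_two_le_frob alpha j1 j2 : j2 != j1 ->
  (r j1 + alpha) ^+ 2 + (r j2 + alpha) ^+ 2 <= frob_norm (A + alpha%:M) ^+ 2.
Proof.
move=> j2_neq; rewrite sqr_frob_norm sum_sqr_spectral (bigD1 j1) //= (bigD1 j2) //=.
by rewrite addrA lerDl sumr_ge0 // => j _; rewrite sqr_ge0.
Qed.

Lemma top_eigenvalue_gap_weight alpha k j1 :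
  (0 < k)%N -> (k.*2 < n)%N -> A + alpha%:M != 0 -> (forall j, r j <= r j1) ->
  Num.sqrt ((n - k)%:R ^+ 2 + k%:R ^+ 2) * frob_norm (A + alpha%:M) <=
    ones_quad (A + alpha%:M) ->
  (forall j, j != j1 -> r j < r j1) /\ (n - k)%:R <= weight j1.
Proof.
move=> k_gt0 k_lt_half B_neq0 j1_max bound.
have [i0 i0_neq] : exists i0 : 'I_n, i0 != j1.
  have : (0 < #|[pred j : 'I_n | j != j1]|)%N by rewrite cardC1 card_ord; lia.
  by case/card_gt0P => i0; exists i0.
have [j2 j2_neq j2_max] := @arg_maxP _ _ _ _ (predC1 j1) r i0_neq.
have nk : (n - k)%:R = n%:R - k%:R :> R by rewrite natrB //; lia.
have K_lt_half : 2 * k%:R < n%:R :> R by rewrite -natrM ltr_nat mul2n.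
have ab_le_F := sqr_top_two_le_frob alpha j2_neq.
have F_gt0 := frob_norm_gt0 B_neq0.
have b_le_a : r j2 + alpha <= r j1 + alpha by rewrite lerD2r.
rewrite nk in bound; have cF_le := le_trans bound (ones_quad_le_top_two alpha j2_max).
split; last first.
  by rewrite nk; apply: (top_weight_ge K_lt_half ab_le_F F_gt0 b_le_a cF_le).
move=> j j_neq; apply: le_lt_trans (j2_max j j_neq) _.
by rewrite -(ltrD2r alpha) (top_two_gap K_lt_half ab_le_F F_gt0 b_le_a cF_le).
Qed.

End RealSpectralDecomposition.

Theorem corollary7 (R : rcfType) (n : nat) (A : 'M[R]_n) (alpha : R) (k : nat) :
  A^T = A ->
  A + alpha%:M != 0 ->
  (1 <= k)%N -> (k.*2 < n)%N ->
  ones_quad A >=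
    Num.sqrt (((n - k)%:R) ^+ 2 + (k%:R) ^+ 2) * frob_norm (A + alpha%:M)
    - n%:R * alpha ->
  exists lambda : R,
    [/\ eigenvalue A lambda,
        (forall mu : R, eigenvalue A mu -> mu <= lambda),
        simple_eigenvalue A lambda &
        exists v : 'cV[R]_n,
          [/\ v != 0, A *m v = lambda *: v &
              ((n - k).+1 <= #|[set i : 'I_n | (0 <= v i ord0)%R]|)%N]].
Proof.
move=> A_sym B_neq0 k_gt0 k_lt_half bound.
have [P [r [P_unitary A_spectral]]] := real_spectral A_sym.
have n_gt0 : (0 < n)%N by lia.
have [j1 _ j1_max] := @arg_maxP _ _ _ (Ordinal n_gt0) predT r isT.
have shifted_bound : Num.sqrt ((n - k)%:R ^+ 2 + k%:R ^+ 2) * frob_norm (A + alpha%:M) <=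
    ones_quad (A + alpha%:M) by rewrite ones_quad_shift -lerBlDr.
have [r_lt weight_ge] := top_eigenvalue_gap_weight A_sym P_unitary A_spectral
  k_gt0 k_lt_half B_neq0 (fun j => j1_max j isT) shifted_bound.
have r_simple j : j != j1 -> r j != r j1 by move/r_lt/lt_eqF ->.
have [x x_neq0 [xA sum_ge0 sqr_sum]] := top_eigenvector P_unitary A_spectral r_simple.
have eigenvalueE := eigenvalue_spectral P_unitary A_spectral.
exists (r j1); split.
- by rewrite eigenvalueE; apply/existsP; exists j1.
- by move=> mu; rewrite eigenvalueE => /existsP [j /eqP ->]; apply: j1_max.
- exact: (mup_char_poly_spectral P_unitary A_spectral r_simple).
exists x^T; split; first by rewrite trmx_eq0.
  by rewrite -{1}A_sym -trmx_mul xA linearZ.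
have -> : [set i : 'I_n | 0 <= x^T i ord0] = [set i | 0 <= x 0 i].
  by apply/setP => i; rewrite !inE mxE.
apply: card_nonneg_gt => //; first by rewrite card_ord; lia.
by rewrite sqr_sum ler_wpM2r // sumr_ge0 // => i _; rewrite sqr_ge0.
Qed.
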